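(* Let $X=\{x_1,\dots,x_n\}$ be a finite $T_0$-space with matrix $X_M=(x_{k,l})$, $i$-th row $r_i$ and $j$-th column $c_j$, and let $i\neq j$. Then $x_i\prec x_j$ if and only if $r_i+c_j^{\intercal}=(p_1,\dots,p_n)$ satisfies $p_i=p_j=0$ and $p_k\neq 0$ for every $k\neq i,j$ (here $p_k=x_{i,k}+x_{k,j}$).
   Context: A finite $T_0$-space is identified with a finite poset via $x\le y$ iff $U_x\subseteq U_y$, where $U_x$ is the minimal open set containing $x$. $X_M=(x_{k,l})$ is the $n\times n$ matrix with $x_{k,l}=0$ if $x_k\le x_l$ and $x_{k,l}=1$ otherwise. $x\prec y$ means $x<y$ and there is no $z$ with $x<z<y$. *)

From mathcomp Require Import all_boot all_order all_algebra.
Set Implicit Arguments. Unset Strict Implicit. Unset Printing Implicit Defensive.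
Import GRing.Theory.

(* A finite topological space on the points x_1..x_n, indexed by 'I_n,
   given by its family of open sets. On a finite set, closure under
   arbitrary unions/intersections reduces to binary ones. *)
Definition is_topology (n : nat) (T : {set {set 'I_n}}) : Prop :=
  [/\ set0 \in T, [set: 'I_n] \in T,
      (forall U V, U \in T -> V \in T -> U :|: V \in T) &
      (forall U V, U \in T -> V \in T -> U :&: V \in T)].

Definition is_T0 (n : nat) (T : {set {set 'I_n}}) : Prop :=
  forall x y : 'I_n, x != y ->
    exists2 U, U \in T & (x \in U) != (y \in U).

Definition minU (n : nat) (T : {set {set 'I_n}}) (x : 'I_n) : {set 'I_n} :=
  \bigcap_(U in T | x \in U) U.

Definition tle (n : nat) (T : {set {set 'I_n}}) (x y : 'I_n) : bool :=
  minU T x \subset minU T y.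

Definition tlt (n : nat) (T : {set {set 'I_n}}) (x y : 'I_n) : bool :=
  (x != y) && tle T x y.

Definition tcovers (n : nat) (T : {set {set 'I_n}}) (x y : 'I_n) : Prop :=
  tlt T x y /\ ~ (exists z, tlt T x z && tlt T z y).

Definition XM (n : nat) (T : {set {set 'I_n}}) : 'M[nat]_n :=
  \matrix_(k < n, l < n) (if tle T k l then 0%N else 1%N).

Definition rc_sum (n : nat) (T : {set {set 'I_n}}) (i j : 'I_n) : 'rV[nat]_n :=
  (row i (XM T) + (col j (XM T))^T)%R.

From mathcomp Require Import all_boot all_order all_algebra.

(* The k-th entry of r_i + c_j^T is [x_i </= x_k] + [x_k </= x_j], so it
   vanishes exactly when x_i <= x_k <= x_j. The conditions p_i = p_j = 0 thus
   say x_i <= x_j, and p_k <> 0 for k <> i, j says that no x_k lies strictly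
   between them. *)

Lemma tle_refl (n : nat) (T : {set {set 'I_n}}) : reflexive (tle T).
Proof. by move=> x; apply: subxx. Qed.

Lemma rc_sumE (n : nat) (T : {set {set 'I_n}}) (i j k : 'I_n) :
  rc_sum T i j ord0 k = (~~ tle T i k + ~~ tle T k j)%N.
Proof. by rewrite !mxE; case: (tle T i k); case: (tle T k j). Qed.

Lemma rc_sum_eq0 (n : nat) (T : {set {set 'I_n}}) (i j k : 'I_n) :
  (rc_sum T i j ord0 k = 0%N) <-> tle T i k && tle T k j.
Proof. by rewrite rc_sumE; case: (tle T i k); case: (tle T k j). Qed.

Lemma tcoversE (n : nat) (T : {set {set 'I_n}}) (i j : 'I_n) :
  tcovers T i j <->
  tlt T i j /\ forall k, k != i -> k != j -> ~~ (tle T i k && tle T k j).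
Proof.
split=> [[ltij noz] | [ltij nok]]; split=> //.
- move=> k ki kj; apply/negP=> /andP [le_ik le_kj]; apply: noz.
  by exists k; rewrite /tlt le_ik le_kj eq_sym ki kj.
- case=> z /andP [/andP [iz le_iz] /andP [zj le_zj]].
  by have := nok z; rewrite eq_sym iz zj le_iz le_zj => /(_ isT isT).
Qed.

Theorem mainTheorem13 (n : nat) (T : {set {set 'I_n}})
  (topT : is_topology T) (t0 : is_T0 T) (i j : 'I_n) (hij : i != j) :
  tcovers T i j <->
  [/\ rc_sum T i j ord0 i = 0%N, rc_sum T i j ord0 j = 0%N &
      forall k : 'I_n, k != i -> k != j -> rc_sum T i j ord0 k <> 0%N].
Proof.
split=> [/tcoversE [/andP [_ le_ij] nok] | [/rc_sum_eq0 /andP [_ le_ij] _ nok]].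
- split; try by apply/rc_sum_eq0; rewrite tle_refl le_ij.
  by move=> k ki kj /rc_sum_eq0; apply/negP/nok.
- apply/tcoversE; split=> [|k ki kj]; first by rewrite /tlt hij.
  by apply/negP=> /rc_sum_eq0; apply: nok.
Qed.
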